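(* Under the standing setup, if $s_1=\dots=s_n=\tfrac12$, then the Nash equilibrium of the zero-sum game in which Georgia chooses $g\in[0,\underline s]$ to minimize $f$ and Hank chooses $h\in[\overline s,1]$ to maximize $f$ is $(g^*,h^* )=(0,1)$.
   Context: Standing setup. Fix $n\in\mathbb N$ and $W=[w_{ij}]\in\mathbb R^{n\times n}$ with $w_{ij}\ge0$, $w_{ii}=0$. Let $\|W\|_\infty=\max_i\sum_j|w_{ij}|$, $\|W\|_1=\max_j\sum_i|w_{ij}|$, let $\lambda$ be the spectral radius of $W$, and assume there is $c\in\mathbb R^n$ with all entries positive and $W^\top c=\lambda c$. Fix $\beta\ge\gamma\ge0$ with $1-\max\{\|W\|_\infty,\|W\|_1\}>\max\{2\beta,4\gamma\}$. Fix $s\in[0,1]^n$, $\overline s=\max_is_i$, $\underline s=\min_is_i$. Set $\widehat c_i=c_i/\sum_jc_j$, $\widehat s=\sum_i\widehat c_is_i$, $\chi=\sum_i\widehat c_is_i\sum_jw_{ij}$. Define $$f(g,h)=\frac{(1-2\beta+(h-g)\gamma)\widehat s-\chi+(h+g)\beta+(g^2-h^2)\gamma}{1-\lambda+(g-h)\gamma}\,c^\top\mathbf 1$$ (the centrality-weighted steady state of the opinion dynamics with source opinions $g,h$). *)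

From HB Require Import structures.
From mathcomp Require Import all_boot all_order all_algebra.
Set Implicit Arguments. Unset Strict Implicit. Unset Printing Implicit Defensive.
Import Order.TTheory GRing.Theory Num.Theory.
Local Open Scope ring_scope.

Section Defs.
Variables (R : rcfType) (n : nat).

Definition normInf (W : 'M[R]_n) : R := \big[Num.max/0]_(i < n) \sum_(j < n) `|W i j|.
Definition norm1 (W : 'M[R]_n) : R := \big[Num.max/0]_(j < n) \sum_(i < n) `|W i j|.

(* a + b*i (a,b in R) is a complex eigenvalue of W: there is a nonzero complex
   vector x + i y with W (x + i y) = (a + i b)(x + i y). *)
Definition complex_eigenvalue (W : 'M[R]_n) (a b : R) : Prop :=
  exists x y : 'cV[R]_n, (x != 0 \/ y != 0) /\
    W *m x = a *: x - b *: y /\ W *m y = b *: x + a *: y.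

Definition spectral_radius (W : 'M[R]_n) (lam : R) : Prop :=
  0 <= lam /\
  (exists a b, complex_eigenvalue W a b /\ lam ^+ 2 = a ^+ 2 + b ^+ 2) /\
  (forall a b, complex_eigenvalue W a b -> a ^+ 2 + b ^+ 2 <= lam ^+ 2).

Definition s_max (s : 'I_n -> R) : R := \big[Num.max/0]_(i < n) s i.
Definition s_min (s : 'I_n -> R) : R := \big[Num.min/1]_(i < n) s i.

Definition c_sum (c : 'cV[R]_n) : R := \sum_(j < n) c j 0.
Definition c_hat (c : 'cV[R]_n) (i : 'I_n) : R := c i 0 / c_sum c.
Definition s_hat (c : 'cV[R]_n) (s : 'I_n -> R) : R := \sum_(i < n) c_hat c i * s i.
Definition chi (W : 'M[R]_n) (c : 'cV[R]_n) (s : 'I_n -> R) : R :=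
  \sum_(i < n) c_hat c i * s i * \sum_(j < n) W i j.

Definition f_ss (W : 'M[R]_n) (c : 'cV[R]_n) (lam beta gamma : R) (s : 'I_n -> R)
    (g h : R) : R :=
  ((1 - 2 * beta + (h - g) * gamma) * s_hat c s - chi W c s + (h + g) * beta
     + (g ^+ 2 - h ^+ 2) * gamma) / (1 - lam + (g - h) * gamma) * c_sum c.

End Defs.

Definition nash_equilibrium (R : realFieldType) (F : R -> R -> R)
    (glo ghi hlo hhi gs hs : R) : Prop :=
  [/\ glo <= gs <= ghi, hlo <= hs <= hhi,
      (forall g, glo <= g <= ghi -> F gs hs <= F g hs) &
      (forall h, hlo <= h <= hhi -> F gs h <= F gs hs)].

From HB Require Import structures.
From mathcomp Require Import all_boot all_order all_algebra.
From mathcomp Require Import ring lra.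
Import Order.TTheory GRing.Theory Num.Theory.
Local Open Scope ring_scope.

(* Write C = c^T 1 and D(g,h) = 1 - lam + (g - h) gamma.  When every
   source opinion equals 1/2, the weighted averages collapse: s_hat = 1/2, and
   since c is a left eigenvector of W, chi = lam/2.  The steady state then reads
       f(g,h) = C (1/2 + E(g,h)),   E(g,h) = (h + g - 1)(beta - (h - g) gamma) / D(g,h).
   The row-sum bound lam <= ||W||_inf (again from the eigenvector equation, with
   W and c nonnegative) together with 4 gamma < 1 - ||W||_inf makes D positive on
   [0,1]^2.  Then E(0,1) = 0, E(g,1) >= 0 for g in [0,1] (as beta >= gamma), and
   E(0,h) <= 0 for h in [0,1]; multiplying by C >= 0 gives the two saddle-point
   inequalities at (0,1).  Both strategy intervals lie in [0,1] because s does. *)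

Lemma s_min_unit {R : rcfType} {n : nat} {s : 'I_n -> R} :
  (forall i, 0 <= s i <= 1) -> 0 <= s_min s <= 1.
Proof.
move=> s01; rewrite /s_min.
apply: (big_rec (fun y => 0 <= y <= 1)); first by rewrite ler01 lexx.
move=> i y _ /andP[y0 y1]; have /andP[si0 si1] := s01 i.
by rewrite le_min ge_min si0 y0 si1.
Qed.

Lemma s_max_unit {R : rcfType} {n : nat} {s : 'I_n -> R} :
  (forall i, 0 <= s i <= 1) -> 0 <= s_max s <= 1.
Proof.
move=> s01; rewrite /s_max.
apply: (big_rec (fun y => 0 <= y <= 1)); first by rewrite lexx ler01.
move=> i y _ /andP[y0 y1]; have /andP[si0 si1] := s01 i.
by rewrite le_max ge_max si0 y0 si1.
Qed.

Section Eigenvector.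
Context {R : rcfType} {n : nat} {W : 'M[R]_n} {lam : R} {c : 'cV[R]_n}.
Hypothesis c_eigen : W^T *m c = lam *: c.

Lemma eigen_weighted_rowsum :
  \sum_(i < n) c i 0 * \sum_(j < n) W i j = lam * c_sum c.
Proof.
rewrite /c_sum mulr_sumr.
under eq_bigr do rewrite mulr_sumr.
rewrite exchange_big /=; apply: eq_bigr => j _.
have := congr1 (fun M : 'cV[R]_n => M j 0) c_eigen.
rewrite !mxE /= => <-.
by apply: eq_bigr => i _; rewrite !mxE mulrC.
Qed.

(* For nonnegative W and a positive eigenvector, lam is at most the maximal
   row sum; this is what keeps the denominator of f positive. *)
Lemma eigenvalue_le_normInf :
  (forall i j, 0 <= W i j) -> (forall i, 0 < c i 0) -> 0 < c_sum c ->
  lam <= normInf W.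
Proof.
move=> W0 c0 cpos; rewrite -(ler_pM2r cpos) -eigen_weighted_rowsum.
rewrite /c_sum mulr_sumr; apply: ler_sum => i _.
rewrite mulrC; apply: ler_wpM2r; first exact: ltW.
rewrite (eq_bigr (fun j => `|W i j|)) => [|j _]; last by rewrite ger0_norm.
exact: le_bigmax.
Qed.

Lemma s_hat_const {s : 'I_n -> R} {a : R} :
  c_sum c != 0 -> (forall i, s i = a) -> s_hat c s = a.
Proof.
move=> cs_neq0 sa; rewrite /s_hat; under eq_bigr do rewrite sa.
by rewrite -mulr_suml /c_hat -mulr_suml -/(c_sum c) divff ?mul1r.
Qed.

Lemma chi_const {s : 'I_n -> R} {a : R} :
  c_sum c != 0 -> (forall i, s i = a) -> chi W c s = a * lam.
Proof.
move=> cs_neq0 sa; rewrite /chi; under eq_bigr do rewrite sa /c_hat.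
rewrite (eq_bigr (fun i => (a / c_sum c) * (c i 0 * \sum_(j < n) W i j)));
  last by move=> i _; field.
by rewrite -mulr_sumr eigen_weighted_rowsum; field.
Qed.

End Eigenvector.

Section Excess.
Context {R : realFieldType} (lam beta gamma : R).

(* Denominator of the steady state and the deviation of f/C from 1/2. *)
Definition denom (g h : R) : R := 1 - lam + (g - h) * gamma.
Definition excess (g h : R) : R :=
  (h + g - 1) * (beta - (h - g) * gamma) / denom g h.

(* On the unit square the gap g - h is at least -1, so D >= 1 - lam - gamma > 0. *)
Lemma denom_gt0 (g h : R) :
  0 <= gamma -> gamma < 1 - lam -> 0 <= g <= 1 -> 0 <= h <= 1 -> 0 < denom g h.
Proof.
move=> gamma_ge0 gamma_lt /andP[g0 g1] /andP[h0 h1]; rewrite /denom.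
have : 0 <= (g - h + 1) * gamma by apply: mulr_ge0; lra.
rewrite mulrDl mul1r; lra.
Qed.

Lemma excess_corner : excess 0 1 = 0.
Proof. by rewrite /excess addr0 subrr !mul0r. Qed.

Lemma excess_row_ge0 (g : R) :
  0 <= gamma -> gamma <= beta -> gamma < 1 - lam -> 0 <= g <= 1 -> 0 <= excess g 1.
Proof.
move=> gamma_ge0 gamma_le_beta gamma_lt g01; have /andP[g0 g1] := g01.
rewrite /excess; apply: divr_ge0; last by apply/ltW/denom_gt0; rewrite ?lexx ?ler01.
apply: mulr_ge0; first lra.
have : (1 - g) * gamma <= gamma by nra.
lra.
Qed.

Lemma excess_col_le0 (h : R) :
  0 <= gamma -> gamma <= beta -> gamma < 1 - lam -> 0 <= h <= 1 -> excess 0 h <= 0.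
Proof.
move=> gamma_ge0 gamma_le_beta gamma_lt h01; have /andP[h0 h1] := h01.
rewrite /excess subr0; apply: mulr_le0_ge0; last first.
  by rewrite invr_ge0; apply/ltW/denom_gt0; rewrite ?lexx ?ler01.
apply: mulr_le0_ge0; first lra.
have : h * gamma <= gamma by nra.
lra.
Qed.

End Excess.

Lemma f_ss_half (R : rcfType) (n : nat) (W : 'M[R]_n) (lam : R) (c : 'cV[R]_n)
    (beta gamma : R) (s : 'I_n -> R) (g h : R) :
  W^T *m c = lam *: c -> c_sum c != 0 -> (forall i, s i = 1 / 2) ->
  denom lam gamma g h != 0 ->
  f_ss W c lam beta gamma s g h = c_sum c * (1 / 2 + excess lam beta gamma g h).
Proof.
move=> c_eigen cs_neq0 shalf D_neq0.
rewrite /f_ss (s_hat_const cs_neq0 shalf) (chi_const c_eigen cs_neq0 shalf).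
rewrite /excess mulrC; congr (_ * _).
by rewrite /denom in D_neq0 *; field.
Qed.

Theorem corollary3 (R : rcfType) (n : nat) (W : 'M[R]_n) (lam : R) (c : 'cV[R]_n)
    (beta gamma : R) (s : 'I_n -> R) :
  (forall i j, 0 <= W i j) ->
  (forall i, W i i = 0) ->
  spectral_radius W lam ->
  (forall i, 0 < c i 0) ->
  W^T *m c = lam *: c ->
  gamma <= beta -> 0 <= gamma ->
  Num.max (2 * beta) (4 * gamma) < 1 - Num.max (normInf W) (norm1 W) ->
  (forall i, 0 <= s i <= 1) ->
  (forall i, s i = 1 / 2) ->
  nash_equilibrium (f_ss W c lam beta gamma s)
    0 (s_min s) (s_max s) 1 0 1.
Proof.
move=> W0 _ _ c0 c_eigen gamma_le_beta gamma_ge0 Hgap s01 shalf.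
have /andP[smin0 smin1] := s_min_unit s01.
have /andP[smax0 smax1] := s_max_unit s01.
have cs_ge0 : 0 <= c_sum c by apply: sumr_ge0 => i _; exact: ltW.
have [cs0|cs_neq0] := eqVneq (c_sum c) 0.
  have f0 g h : f_ss W c lam beta gamma s g h = 0 by rewrite /f_ss cs0 mulr0.
  by split; rewrite ?lexx ?smin0 ?smax1 // => x _; rewrite !f0.
have cs_gt0 : 0 < c_sum c by rewrite lt_def cs_neq0 cs_ge0.
have lam_le := eigenvalue_le_normInf c_eigen W0 c0 cs_gt0.
have gamma_lt : gamma < 1 - lam.
  move: Hgap; rewrite gt_max => /andP[_]; rewrite ltrBrDl.
  have : normInf W <= Num.max (normInf W) (norm1 W) by rewrite le_max lexx.
  lra.
have zero01 : 0 <= (0 : R) <= 1 by rewrite lexx ler01.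
have one01 : 0 <= (1 : R) <= 1 by rewrite lexx ler01.
have fE g h : 0 <= g <= 1 -> 0 <= h <= 1 ->
    f_ss W c lam beta gamma s g h = c_sum c * (1 / 2 + excess lam beta gamma g h).
  by move=> g01 h01; rewrite f_ss_half // gt_eqF // denom_gt0.
have f_corner : f_ss W c lam beta gamma s 0 1 = c_sum c * (1 / 2).
  by rewrite fE ?zero01 ?one01 // excess_corner addr0.
split; rewrite ?lexx ?smin0 ?smax1 //.
- move=> g /andP[g0 gs]; have g01 : 0 <= g <= 1 by rewrite g0 (le_trans gs).
  rewrite f_corner fE ?zero01 ?one01 // ler_wpM2l // lerDl.
  exact: excess_row_ge0.
- move=> h /andP[sh h1]; have h01 : 0 <= h <= 1 by rewrite h1 (le_trans _ sh).
  rewrite f_corner fE ?zero01 ?one01 // ler_wpM2l // gerDl.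
  exact: excess_col_le0.
Qed.
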